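(* Let $T$ be an observation table, let $(\equiv,f)$ be a merging map on $T$ of minimal size (i.e. no merging map on $T$ has strictly smaller size), and let $\mathcal{M}$ be the transducer resulting from $(\equiv,f)$. Then $\mathcal{M}$ is compatible with $T$.
   Context: Transducers. A (subsequential string) transducer is a tuple $\mathcal{M}=(\Sigma,\Gamma,Q,q_0,w_0,\delta,\delta_F)$ with finite input alphabet $\Sigma$, finite output alphabet $\Gamma$, finite state set $Q$, initial state $q_0$, initial production $w_0\in\Gamma^*$, partial transition function $\delta:Q\times\Sigma\to Q\times\Gamma^*$ (write $q\xrightarrow{a|w}q'$ when $\delta(q,a)=(q',w)$) and partial final function $\delta_F:Q\to\Gamma^*$ ($q$ is final if $\delta_F(q)$ is defined). Runs are extended to words: $q\xrightarrow{\varepsilon|\varepsilon}{}^*q$, and if $q\xrightarrow{u|w}{}^*q'$ and $q'\xrightarrow{a|w'}q''$ then $q\xrightarrow{ua|ww'}{}^*q''$. The function $\llbracket\mathcal{M}\rrbracket:\Sigma^*\to\Gamma^*$ (partial) is $\llbracket\mathcal{M}\rrbracket(u)=w_0\,w\,\delta_F(q)$ if $q_0\xrightarrow{u|w}{}^*q$ with $q$ final, and undefined otherwise; $\mathrm{dom}$ denotes its domain. The size $|\mathcal{M}|$ is the number of states. Observation tables. Let $P\subseteq\Sigma^*$ be finite and prefix-closed and $S\subseteq\Sigma^*$ finite and suffix-closed, and let $D=(P\cup P\Sigma)\cdot S$. An observation table is a function $T:D\to\Gamma^*\cup\{\#,\bot\}$ (in the learning setting, for a target partial function $\tau$ and a language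 $\mathit{Up}\supseteq\mathrm{dom}(\tau)$: $T(x)=\#$ if $x\notin\mathit{Up}$, $T(x)=\bot$ if $x\in\mathit{Up}\setminus\mathrm{dom}(\tau)$, $T(x)=\tau(x)$ otherwise). By convention $T(x)=\#$ for $x\notin D$. Let $P_T$ be the set of all prefixes of elements of $D$, and $P_\Gamma=\{u\in P_T:\exists v\in\Sigma^*,\ T(uv)\in\Gamma^*\}$. A transducer $\mathcal{M}$ is compatible with $T$ if for all $x\in D$: $T(x)\in\Gamma^*$ implies $\llbracket\mathcal{M}\rrbracket(x)=T(x)$, and $T(x)=\bot$ implies $x\notin\mathrm{dom}(\llbracket\mathcal{M}\rrbracket)$. For words $x,y$ with $x$ a prefix of $y$, $x^{-1}y$ denotes the word $z$ with $xz=y$. Merging maps. A merging map on $T$ is a pair $(\equiv,f)$ where $\equiv$ is an equivalence relation on $P_T$ and $f$ is a partial function $P_T\to\Gamma^*$ such that for all $u,u'\in P_T$ and $a\in\Sigma$: 1. if $f(u)$ is undefined then ($u\equiv u'$ iff $f(u')$ is undefined); 2. if $T(uv)\in\Gamma^*$ for some $v\in\Sigma^*$, then $f(u)$ is defined and is a prefix of $T(uv)$; 3. if $f(ua)$ is defined then $f(u)$ is defined and is a prefix of $f(ua)$; 4. if $f(u)$ is defined, $u\equiv u'$ and $ua,u'a\in P_T$, then $ua\equiv u'a$, and if moreover $f(ua)$ is defined then $f(u)^{-1}f(ua)=f(u')^{-1}f(u'a)$; 5. if $T(u)\in\Gamma^*$ and $u\equiv u'$ then $T(u')\neq\bot$,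 and if moreover $T(u')\in\Gamma^*$ then $f(u)^{-1}T(u)=f(u')^{-1}T(u')$; 6. if $f(ua)$ is defined and there is no $v\in P_T$ with $v\equiv u$ and $va\in P_\Gamma$, then $f(ua)=f(u)$. The size of $(\equiv,f)$ is the number of $\equiv$-classes contained in $\mathrm{dom}(f)$. Resulting transducer. The transducer resulting from a merging map $(\equiv,f)$ has as states the $\equiv$-classes of elements of $\mathrm{dom}(f)$ (write $q_u$ for the class of $u$), initial state $q_\varepsilon$, initial production $f(\varepsilon)$, transitions $q_u\xrightarrow{a|f(u)^{-1}f(ua)}q_{ua}$ for all $u,ua\in\mathrm{dom}(f)$, and final outputs $\delta_F(q_u)=f(u)^{-1}T(u)$ for every $u\in P_T$ with $T(u)\in\Gamma^*$. *)

From mathcomp Require Import all_boot.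
Set Implicit Arguments. Unset Strict Implicit. Unset Printing Implicit Defensive.

Record transducer (Sigma Gamma : Type) := Transducer {
  tstate : Type;
  tq0 : tstate;
  tw0 : seq Gamma;
  tdelta : tstate -> Sigma -> option (tstate * seq Gamma);
  tdeltaF : tstate -> option (seq Gamma) }.

Section Trans.
Variables (Sigma Gamma : Type) (M : transducer Sigma Gamma).

Fixpoint trun (q : tstate M) (u : seq Sigma) : option (tstate M * seq Gamma) :=
  match u with
  | [::] => Some (q, [::])
  | a :: u' =>
      match tdelta q a with
      | Some (q1, w1) =>
          match trun q1 u' with
          | Some (q2, w2) => Some (q2, w1 ++ w2)
          | None => None
          end
      | None => None
      end
  end.

Definition tsem (u : seq Sigma) : option (seq Gamma) :=
  match trun (tq0 M) u with
  | Some (q, w) =>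
      match tdeltaF q with
      | Some wf => Some (tw0 M ++ w ++ wf)
      | None => None
      end
  | None => None
  end.
End Trans.

Inductive tvalue (Gamma : Type) := TOut of seq Gamma | THash | TBot.
Arguments THash {Gamma}. Arguments TBot {Gamma}.

Definition isOut (Gamma : Type) (t : tvalue Gamma) : bool :=
  if t is TOut _ then true else false.

(* x^{-1} y  (meaningful when x is a prefix of y) *)
Definition lquot (Gamma : Type) (x y : seq Gamma) : seq Gamma := drop (size x) y.

Section Table.
Variables (Sigma Gamma : finType) (P S : seq (seq Sigma)).

Definition prefix_closed (L : seq (seq Sigma)) : Prop :=
  forall p i, p \in L -> take i p \in L.
Definition suffix_closed (L : seq (seq Sigma)) : Prop :=
  forall s i, s \in L -> drop i s \in L.

Definition Dom : seq (seq Sigma) :=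
  [seq p ++ s | p <- P ++ [seq rcons p a | p <- P, a <- enum Sigma], s <- S].

Definition PT : seq (seq Sigma) :=
  undup (flatten [seq [seq take i x | i <- iota 0 (size x).+1] | x <- Dom]).

Variable T : seq Sigma -> tvalue Gamma.

Definition PGamma (u : seq Sigma) : Prop :=
  u \in PT /\ exists v, isOut (T (u ++ v)).

Definition out_of (t : tvalue Gamma) : seq Gamma := if t is TOut w then w else [::].

Definition merging_map (eqv : rel (seq Sigma)) (f : seq Sigma -> option (seq Gamma))
  : Prop :=
  [/\
      (forall u, u \in PT -> eqv u u),
      (forall u v, u \in PT -> v \in PT -> eqv u v -> eqv v u),
      (forall u v w, u \in PT -> v \in PT -> w \in PT ->
                       eqv u v -> eqv v w -> eqv u w),
      (forall u, u \notin PT -> f u = None) &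
  [/\ [/\ (* 1 *)
      (forall u u', u \in PT -> u' \in PT -> f u = None ->
         (eqv u u' <-> f u' = None)),
      (* 2 *)
      (forall u v, u \in PT -> isOut (T (u ++ v)) ->
         exists w, f u = Some w /\ prefix w (out_of (T (u ++ v))))
    & (* 3 *)
      (forall u a w', u \in PT -> rcons u a \in PT -> f (rcons u a) = Some w' ->
         exists w, f u = Some w /\ prefix w w')],
    (* 4 *)
      (forall u u' a w, u \in PT -> u' \in PT -> f u = Some w -> eqv u u' ->
         rcons u a \in PT -> rcons u' a \in PT ->
         eqv (rcons u a) (rcons u' a) /\
         (forall wa, f (rcons u a) = Some wa ->
            exists w' w'a, [/\ f u' = Some w', f (rcons u' a) = Some w'a &
                               lquot w wa = lquot w' w'a])),
    (* 5 *)
      (forall u u', u \in PT -> u' \in PT -> isOut (T u) -> eqv u u' ->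
         T u' <> TBot /\
         (isOut (T u') -> exists w w', [/\ f u = Some w, f u' = Some w' &
            lquot w (out_of (T u)) = lquot w' (out_of (T u'))]))
    & (* 6 *)
      (forall u a w, u \in PT -> rcons u a \in PT -> f (rcons u a) = Some w ->
         ~ (exists v, [/\ v \in PT, eqv v u & PGamma (rcons v a)]) ->
         f u = Some w)]].

Definition cls (eqv : rel (seq Sigma)) (u : seq Sigma) : seq (seq Sigma) :=
  [seq v <- PT | eqv u v].

Definition mm_size (eqv : rel (seq Sigma)) (f : seq Sigma -> option (seq Gamma)) : nat :=
  size (undup [seq cls eqv u | u <- PT & f u != None]).

(* A state q_u is represented by
   the class cls eqv u; transitions and final outputs are read off any
   representative (well defined by the merging-map axioms). *)
Definition result_delta (eqv : rel (seq Sigma)) (f : seq Sigma -> option (seq Gamma))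
  (c : seq (seq Sigma)) (a : Sigma) : option (seq (seq Sigma) * seq Gamma) :=
  match [seq u <- PT | [&& cls eqv u == c, f u != None & f (rcons u a) != None]] with
  | u :: _ => Some (cls eqv (rcons u a), lquot (odflt [::] (f u)) (odflt [::] (f (rcons u a))))
  | [::] => None
  end.

Definition result_deltaF (eqv : rel (seq Sigma)) (f : seq Sigma -> option (seq Gamma))
  (c : seq (seq Sigma)) : option (seq Gamma) :=
  match [seq u <- PT | (cls eqv u == c) && isOut (T u)] with
  | u :: _ => Some (lquot (odflt [::] (f u)) (out_of (T u)))
  | [::] => None
  end.

Definition result_transducer (eqv : rel (seq Sigma)) (f : seq Sigma -> option (seq Gamma))
  : transducer Sigma Gamma :=
  @Transducer Sigma Gamma (seq (seq Sigma)) (cls eqv [::]) (odflt [::] (f [::]))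
    (result_delta eqv f) (result_deltaF eqv f).

Definition compatible (M : transducer Sigma Gamma) : Prop :=
  forall x, x \in Dom ->
    (forall w, T x = TOut w -> tsem M x = Some w) /\
    (T x = TBot -> tsem M x = None).
End Table.

From mathcomp Require Import all_boot.

Set Implicit Arguments.
Unset Strict Implicit.
Unset Printing Implicit Defensive.

(* The transducer resulting from ANY merging map (eqv, f) on T is compatible
   with T.

   States are the
   eqv-classes [cls eqv u]; by axiom 4 the transition read off an arbitrary
   representative of the class of u behaves like the one read off u itself,
   so reading v from the class of u leads to the class of u ++ v and
   produces f(u)^{-1} f(u ++ v) (axiom 3 makes f grow along prefixes).
   Axiom 2 guarantees that f is defined on every prefix of an entry x with
   T(x) an output, so such a run exists; axiom 5 makes the final output of
   the class of x equal to f(x)^{-1} T(x) when T(x) is an output, and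
   undefined when T(x) = _|_.  Chaining the three pieces gives
   [[M]](x) = f([]) . f([])^{-1} f(x) . f(x)^{-1} T(x) = T(x). *)

Lemma cat_lquot (Gamma : eqType) (w w' : seq Gamma) :
  prefix w w' -> w ++ lquot w w' = w'.
Proof. by move/prefixP=> [s ->]; rewrite /lquot drop_size_cat. Qed.

Lemma filter_head (A : eqType) (p : pred A) (s l : seq A) (x : A) :
  [seq y <- s | p y] = x :: l -> p x /\ x \in s.
Proof.
move=> E; have : x \in [seq y <- s | p y] by rewrite E mem_head.
by rewrite mem_filter => /andP[].
Qed.

Lemma filter_nonnil (A : eqType) (p : pred A) (s : seq A) (x : A) :
  p x -> x \in s -> [seq y <- s | p y] != [::].
Proof. by move=> px xs; rewrite -has_filter; apply/hasP; exists x. Qed.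

Lemma take_cat_cons (A : Type) (u v : seq A) (a : A) :
  take (size u).+1 (u ++ a :: v) = rcons u a.
Proof. by elim: u => [|b u IH] /=; [rewrite take0 | rewrite IH]. Qed.

Lemma take_Dom_PT (Sigma : finType) (P S : seq (seq Sigma)) x i :
  x \in Dom P S -> take i x \in PT P S.
Proof.
move=> hx; rewrite /PT mem_undup; apply/flattenP.
exists [seq take i x | i <- iota 0 (size x).+1]; first by apply/mapP; exists x.
case: (leqP i (size x)) => hi.
  by apply/mapP; exists i => //; rewrite mem_iota add0n ltnS.
apply/mapP; exists (size x); first by rewrite mem_iota add0n ltnS leqnn.
by rewrite take_size take_oversize // ltnW.
Qed.

Section ResultingTransducer.
Variables (Sigma Gamma : finType) (P S : seq (seq Sigma)).
Variable T : seq Sigma -> tvalue Gamma.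
Variables (eqv : rel (seq Sigma)) (f : seq Sigma -> option (seq Gamma)).
Hypothesis hmm : merging_map P S T eqv f.

Local Notation PT := (PT P S).
Local Notation cls := (cls P S eqv).
Local Notation M := (result_transducer P S T eqv f).

Definition prefixes_in_PT (x : seq Sigma) : Prop := forall i, take i x \in PT.

Lemma prefixes_in_PT_rcons u a v :
  prefixes_in_PT (u ++ a :: v) -> u \in PT /\ rcons u a \in PT.
Proof.
move=> hx; split; first by have := hx (size u); rewrite take_size_cat.
by have := hx (size u).+1; rewrite take_cat_cons.
Qed.

Lemma f_dom u w : f u = Some w -> u \in PT.
Proof.
case: hmm => _ _ _ hdom _ hu; apply/negPn/negP => hn.
by rewrite hdom in hu.
Qed.

Lemma cls_eqv u u' : u \in PT -> u' \in PT -> cls u = cls u' -> eqv u u'.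
Proof.
case: hmm => refl _ _ _ _ hu hu' E.
have : u' \in cls u' by rewrite mem_filter refl // hu'.
by rewrite -E mem_filter => /andP[].
Qed.

Lemma eqv_cls u u' : u \in PT -> u' \in PT -> eqv u u' -> cls u = cls u'.
Proof.
case: hmm => _ sym trans _ _ hu hu' e.
apply: eq_in_filter => v hv; apply/idP/idP => h; last exact: (trans u u' v).
by apply: (trans u' u v) => //; apply: sym.
Qed.

Lemma f_defined_prefix x w i :
  x \in Dom P S -> T x = TOut w -> exists wi, f (take i x) = Some wi.
Proof.
case: hmm => _ _ _ _ [[_ h2 _] _ _ _] hx Tx.
have [|wi [-> _]] := h2 (take i x) (drop i x) (take_Dom_PT i hx).
  by rewrite cat_take_drop Tx.
by exists wi.
Qed.

(* A transition of M from the class of u, read off some representative,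
   leads to the class of u.a and outputs f(u)^{-1} f(u.a) (axiom 4). *)
Lemma result_delta_cls u a c out :
  u \in PT -> rcons u a \in PT -> tdelta (t:=M) (cls u) a = Some (c, out) ->
  c = cls (rcons u a) /\
  exists w wa, [/\ f u = Some w, f (rcons u a) = Some wa & out = lquot w wa].
Proof.
case: hmm => _ _ _ _ [_ h4 _ _] hu hua /=; rewrite /result_delta.
case E: (filter _ _) => [|u' l] //.
have [/and3P[/eqP Ec fu' fu'a] hu'] := filter_head E.
case F1: (f u') fu' => [w1|] // _; case F2: (f (rcons u' a)) fu'a => [w2|] // _.
move=> [<- <-] /=.
have e : eqv u' u by apply: cls_eqv.
have [e2 hw] := h4 u' u a w1 hu' hu F1 e (f_dom F2) hua.
have [w [wa [-> -> Eq]]] := hw _ F2.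
by split; [apply: eqv_cls (f_dom F2) hua e2 | exists w, wa; rewrite Eq].
Qed.

Lemma result_delta_defined u a w wa :
  u \in PT -> rcons u a \in PT -> f u = Some w -> f (rcons u a) = Some wa ->
  exists c out, tdelta (t:=M) (cls u) a = Some (c, out).
Proof.
move=> hu hua fu fua /=; rewrite /result_delta.
have : [seq u' <- PT | [&& cls u' == cls u, f u' != None & f (rcons u' a) != None]]
       != [::] by apply: (filter_nonnil (x:=u)); rewrite // eqxx fu fua.
by case: (filter _ _) => [|u' l] //= _; do 2 eexists.
Qed.

(* Reading v from the class of u leads to the class of u ++ v, producing
   f(u)^{-1} f(u ++ v) (axiom 3 makes f(u) a prefix of f(u.a)). *)
Lemma result_run v u c out :
  prefixes_in_PT (u ++ v) -> trun (M:=M) (cls u) v = Some (c, out) ->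
  c = cls (u ++ v) /\ (forall w, f u = Some w -> f (u ++ v) = Some (w ++ out)).
Proof.
case: hmm => _ _ _ _ [[_ _ h3] _ _ _].
elim: v u c out => [|a v IH] u c out hpre /=.
  by case=> <- <-; rewrite !cats0; split => // w ->; rewrite cats0.
have [hu hua] := prefixes_in_PT_rcons hpre.
case D: (result_delta _ _ _ _ _ _) => [[c1 o1]|] //.
have [-> [w [wa [fu fua ->]]]] := result_delta_cls hu hua D.
case R: (trun _ _) => [[c2 o2]|] // [<- <-].
rewrite -cat_rcons in hpre *.
have [-> IHf] := IH _ _ _ hpre R.
split => // w' fw'; rewrite (IHf _ fua) catA; congr (Some (_ ++ _)).
have [w0 [fw0 pw0]] := h3 u a wa hu hua fua.
have Ew' : w' = w by move: fw'; rewrite fu => -[].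
have Ew0 : w0 = w by move: fw0; rewrite fu => -[].
by rewrite Ew' cat_lquot // -Ew0.
Qed.

Lemma result_run_defined v u :
  prefixes_in_PT (u ++ v) -> (forall i, exists wi, f (take i (u ++ v)) = Some wi) ->
  exists c out, trun (M:=M) (cls u) v = Some (c, out).
Proof.
elim: v u => [|a v IH] u hpre hf /=; first by do 2 eexists.
have [hu hua] := prefixes_in_PT_rcons hpre.
have [w fu] : exists w, f u = Some w by have := hf (size u); rewrite take_size_cat.
have [wa fua] : exists wa, f (rcons u a) = Some wa
  by have := hf (size u).+1; rewrite take_cat_cons.
have [c1 [o1 D]] := result_delta_defined hu hua fu fua; rewrite /= in D.
rewrite D; have [-> _] := result_delta_cls hu hua D.
rewrite -cat_rcons in hpre hf.
by have [c [o ->]] := IH _ hpre hf; do 2 eexists.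
Qed.

(* The final output of the class of an output entry u is f(u)^{-1} T(u),
   whatever representative it is read from (axiom 5). *)
Lemma result_deltaF_out u w wu :
  u \in PT -> T u = TOut w -> f u = Some wu ->
  tdeltaF (t:=M) (cls u) = Some (lquot wu w).
Proof.
case: hmm => _ _ _ _ [_ _ h5 _] hu Tu fu /=; rewrite /result_deltaF.
case E: (filter _ _) => [|u' l].
  have := @filter_nonnil _ (fun v => (cls v == cls u) && isOut (T v)) PT u.
  by rewrite eqxx Tu E; move=> /(_ isT hu).
have [/andP[/eqP Ec ou'] hu'] := filter_head E.
have e : eqv u u' by apply: cls_eqv => //; rewrite Ec.
have ou : isOut (T u) by rewrite Tu.
have [_ /(_ ou') [w1 [w' [fu1 -> Eq]]]] := h5 u u' hu hu' ou e.
by move: fu1 Eq; rewrite fu Tu => -[<-] /= <-.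
Qed.

Lemma result_deltaF_bot u :
  u \in PT -> T u = TBot -> tdeltaF (t:=M) (cls u) = None.
Proof.
case: hmm => _ _ _ _ [_ _ h5 _] hu Tu /=; rewrite /result_deltaF.
case E: (filter _ _) => [|u' l] //.
have [/andP[/eqP Ec ou'] hu'] := filter_head E.
have e : eqv u' u by apply: cls_eqv.
by have [] := h5 u' u hu' hu ou' e.
Qed.

Theorem merging_map_compatible : compatible P S T M.
Proof.
case: hmm => _ _ _ _ [[_ h2 _] _ _ _].
move=> x hx; have hpre : prefixes_in_PT ([::] ++ x) by move=> i; apply: take_Dom_PT.
have hxPT : x \in PT by rewrite -(take_size x); apply: take_Dom_PT.
have hnil : [::] \in PT by rewrite -(take0 x); apply: take_Dom_PT.
split=> [w Tx | Tx].
- have [c [out R]] := result_run_defined hpre (fun i => f_defined_prefix i hx Tx).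
  have [Ec fx] := result_run hpre R.
  have [w0 [f0 _]] := h2 [::] x hnil ltac:(by rewrite Tx).
  have [wx [fx' pwx]] := h2 x [::] hxPT ltac:(by rewrite cats0 Tx).
  move: fx'; rewrite /= (fx _ f0) => -[Ewx].
  have := result_deltaF_out hxPT Tx (fx _ f0); rewrite /= => F.
  rewrite /tsem /= R Ec F f0 /=.
  by rewrite catA Ewx cat_lquot //; move: pwx; rewrite cats0 Tx.
- rewrite /tsem; case R: (trun _ _) => [[c out]|] //.
  have [Ec _] := result_run hpre R.
  by move: (result_deltaF_bot hxPT Tx); rewrite /= Ec => ->.
Qed.

End ResultingTransducer.

Theorem lemma1 (Sigma Gamma : finType) (P S : seq (seq Sigma))
  (T : seq Sigma -> tvalue Gamma)
  (hP : prefix_closed P) (hS : suffix_closed S)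
  (hT : forall x, x \notin Dom P S -> T x = THash)
  (eqv : rel (seq Sigma)) (f : seq Sigma -> option (seq Gamma))
  (hmm : merging_map P S T eqv f)
  (hmin : forall eqv' f', merging_map P S T eqv' f' ->
            mm_size P S eqv f <= mm_size P S eqv' f') :
  compatible P S T (result_transducer P S T eqv f).
Proof. exact: merging_map_compatible. Qed.
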